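(* Let $\pi=(\pi_n^{n+1}\colon(X_{n+1},f_{n+1})\to(X_n,f_n))_{n\ge1}$ be an inverse sequence of equivariant maps, let $(X,f)=\lim_\pi(X_n,f_n)$, and suppose $f_n$ is chain transitive for every $n\ge1$ (so $f$ is chain transitive). Let $\mathcal{D}_\pi=\{(D_n)_{n\ge1}\in\prod_{n\ge1}\mathcal{D}(f_n):\pi_n^{n+1}(D_{n+1})\subset D_n\ \forall n\ge1\}$ and, for $D_\ast=(D_n)_{n\ge1}\in\mathcal{D}_\pi$, $[D_\ast]=\{x=(x_n)_{n\ge1}\in X:x_n\in D_n\ \forall n\ge1\}$. If $\pi$ satisfies MLC(1), then $\mathcal{D}(f)=\{[D_\ast]:D_\ast\in\mathcal{D}_\pi\}$.
   Context: Each $X_n$ is a compact metric space, $f_n$ a continuous self-map, $\pi_n^{n+1}\colon X_{n+1}\to X_n$ continuous with $f_n\circ\pi_n^{n+1}=\pi_n^{n+1}\circ f_{n+1}$. $X=\{(x_n)\in\prod_n X_n:\pi_n^{n+1}(x_{n+1})=x_n\ \forall n\}$ with the product topology and $f((x_n))=(f_n(x_n))$. $\pi$ satisfies MLC(1) if $\pi_n^{n+1}(X_{n+1})=\pi_n^{n+1}(\pi_{n+1}^{n+2}(X_{n+2}))$ for all $n$. For a continuous map $g$ of a compact metric space $(Y,d)$: a $\delta$-chain is a finite sequence $(y_i)_{i=0}^k$, $k>0$, with $d(g(y_i),y_{i+1})\le\delta$, a $\delta$-cycle of length $k$ if $y_0=y_k$; $g$ is chain transitive if any two points are joined by a $\delta$-chain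 for every $\delta>0$. For chain transitive $g$ and $\delta>0$, $m(g,\delta)$ is the gcd of the lengths of $\delta$-cycles; $y\sim_{g,\delta}z$ iff there is a $\delta$-chain from $y$ to $z$ of length divisible by $m(g,\delta)$; $y\sim_g z$ iff $y\sim_{g,\delta}z$ for all $\delta>0$; $\mathcal{D}(g)$ is the set of equivalence classes of $\sim_g$. *)

From HB Require Import structures.
From mathcomp Require Import all_boot all_order all_algebra.
From mathcomp Require Import all_classical all_reals.
From mathcomp Require Import topology metric_structure.
Set Implicit Arguments. Unset Strict Implicit. Unset Printing Implicit Defensive.
Import Order.TTheory GRing.Theory Num.Theory.
Local Open Scope classical_set_scope.
Local Open Scope ring_scope.

Section ChainDefs.
Context {R : realType} {T : Type} (d : T -> T -> R) (g : T -> T).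

Definition dchain (delta : R) (y z : T) (k : nat) : Prop :=
  exists ys : nat -> T, [/\ (0 < k)%N, ys 0%N = y, ys k = z &
    forall i, (i < k)%N -> d (g (ys i)) (ys i.+1) <= delta].

Definition cycle_lengths (delta : R) : set nat :=
  [set k | exists y, dchain delta y y k].

Definition chain_transitive : Prop :=
  forall (delta : R) (y z : T), 0 < delta -> exists k, dchain delta y z k.

(** gcd of a set of natural numbers (0 for the empty set) *)
Definition gcd_set (S : set nat) : nat :=
  xget 0%N [set m | (forall k, S k -> (m %| k)%N) /\
                    (forall m', (forall k, S k -> (m' %| k)%N) -> (m' %| m)%N)].

Definition mper (delta : R) : nat := gcd_set (cycle_lengths delta).

Definition sim_delta (delta : R) (y z : T) : Prop :=
  exists k, dchain delta y z k /\ (mper delta %| k)%N.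

Definition sim (y z : T) : Prop := forall delta : R, 0 < delta -> sim_delta delta y z.

Definition Dcl : set (set T) := [set C | exists y, C = [set z | sim y z]].

End ChainDefs.

(** inverse limit of (X_n, pi_n^{n+1}) (indices start at 0) *)
Definition invlim {R : realType} (X : nat -> metricType R)
  (pi : forall n, X n.+1 -> X n) : Type :=
  {x : forall n, X n | forall n, pi n (x n.+1) = x n}.

Definition limf {R : realType} (X : nat -> metricType R)
  (pi : forall n, X n.+1 -> X n) (f : forall n, X n -> X n)
  (hc : forall n (x : X n.+1), f n (pi n x) = pi n (f n.+1 x))
  (x : invlim pi) : invlim pi :=
  @exist (forall n, X n) (fun y => forall n, pi n (y n.+1) = y n) (fun n => f n (proj1_sig x n))
    (fun n => eq_trans (esym (hc n (proj1_sig x n.+1)))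
                       (f_equal (f n) (proj2_sig x n))).

(** a metric inducing the product topology on the inverse limit:
    d(x,y) = sup_n 2^-n min(1, d_n(x_n, y_n)) *)
Definition limdist {R : realType} (X : nat -> metricType R)
  (pi : forall n, X n.+1 -> X n) (x y : invlim pi) : R :=
  sup [set r : R | exists n, r = (2 : R) ^- n *
        Order.min 1 (mdist (proj1_sig x n) (proj1_sig y n))].

Definition MLC1 {R : realType} (X : nat -> metricType R)
  (pi : forall n, X n.+1 -> X n) : Prop :=
  forall n, range (pi n) = pi n @` range (pi n.+1).
Arguments limdist {R X} pi x y.

(* Write ~ for the relation sim.  Equivariant uniformly continuous maps preserve ~; in
   particular the bonding maps pi_n and the projections of the inverse limit do, so the
   coordinates of a ~-class of f lie in compatible ~-classes of the f_n.  Conversely,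
   x ~ z as soon as x_n ~ z_n for every n: given e, the distance on the inverse limit is
   controlled up to e by one coordinate N, and by MLC(1) every point of pi_N(X_(N+1)) lies
   on a thread, so delta-chains and delta-cycles of f_(N+1) project to e-chains and
   e-cycles of f; in particular m(f, e) divides m(f_(N+1), delta).  Finally the ~-classes
   of the f_n are closed, hence by compactness every compatible family (D_n) contains a
   thread y, and then [D_*] is the ~-class of y. *)

From HB Require Import structures.
From mathcomp Require Import all_boot all_order all_algebra interval_inference.
From mathcomp Require Import all_classical all_reals.
From mathcomp Require Import topology metric_structure num_normedtype.
From mathcomp Require Import lra.
Import Order.TTheory GRing.Theory Num.Theory.
Local Open Scope classical_set_scope.
Local Open Scope ring_scope.
Set Implicit Arguments. Unset Printing Implicit Defensive.

Lemma gcd_set_spec (S : set nat) : exists m : nat,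
  (forall k, S k -> (m %| k)%N) /\
  (forall m', (forall k, S k -> (m' %| k)%N) -> (m' %| m)%N).
Proof.
have [[k0 [Sk0 k0_gt0]]|noS] := pselect (exists k, S k /\ (0 < k)%N); last first.
  exists 0%N; split => [k Sk|m' _]; last exact: dvdn0.
  rewrite dvd0n; apply/negPn/negP => k_neq0; apply: noS.
  by exists k; rewrite lt0n.
(* the gcd is the least positive gcd of a finite subfamily of S *)
pose fingcd j := exists s : seq nat,
  [/\ forall k, k \in s -> S k, foldr gcdn 0%N s = j & (0 < j)%N].
have ex_fingcd : exists j, `[< fingcd j >].
  exists k0; apply/asboolP; exists [:: k0]; split => //=; last by rewrite gcdn0.
  by move=> k; rewrite inE => /eqP ->.
case: (ex_minnP ex_fingcd) => g /asboolP [s [sS <- g_gt0]] g_min.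
exists (foldr gcdn 0 s); split => [k Sk|m' m'S]; last first.
  elim: s sS {g_gt0 g_min} => [|a s IHs] sS /=; first exact: dvdn0.
  rewrite dvdn_gcd IHs ?andbT; first by apply/m'S/sS; rewrite inE eqxx.
  by move=> k ks; apply: sS; rewrite inE ks orbT.
have fingcd_k : `[< fingcd (gcdn k (foldr gcdn 0 s)) >].
  apply/asboolP; exists (k :: s); split => //=; last by rewrite gcdn_gt0 g_gt0 orbT.
  by move=> x; rewrite inE => /orP[/eqP ->|/sS].
suff <- : gcdn k (foldr gcdn 0 s) = foldr gcdn 0 s by exact: dvdn_gcdl.
apply/eqP; rewrite eqn_leq g_min // andbT dvdn_leq //; exact: dvdn_gcdr.
Qed.

Section Chains.
Context {R : realType} {T : Type} (d : T -> T -> R) (g : T -> T).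

Lemma mper_dvd delta k : cycle_lengths d g delta k -> (mper d g delta %| k)%N.
Proof. by have [+ _] := xgetPex 0%N (gcd_set_spec (cycle_lengths d g delta)); apply. Qed.

Lemma dvd_mper delta m : (forall k, cycle_lengths d g delta k -> (m %| k)%N) ->
  (m %| mper d g delta)%N.
Proof. by have [_] := xgetPex 0%N (gcd_set_spec (cycle_lengths d g delta)); apply. Qed.

Lemma dchain_cat delta y z w k l : dchain d g delta y z k -> dchain d g delta z w l ->
  dchain d g delta y w (k + l).
Proof.
move=> [ys [k_gt0 <- yk ys_step]] [zs [l_gt0 z0 <- zs_step]].
exists (fun i => if (i <= k)%N then ys i else zs (i - k)%N); split.
- by rewrite addn_gt0 k_gt0.
- by rewrite leq0n.
- by rewrite -{2}(addn0 k) leq_add2l leqNgt l_gt0 /= addKn.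
move=> i ikl; case: (ltngtP i k) => [ik|ki|->]; first exact: ys_step.
  by rewrite subSn ?(ltnW ki) //; apply: zs_step; rewrite ltn_subLR // ltnW.
by rewrite subSnn yk -z0; apply: zs_step.
Qed.

Lemma dchain_le delta delta' y z k : delta <= delta' ->
  dchain d g delta y z k -> dchain d g delta' y z k.
Proof.
move=> le_delta [ys [k_gt0 y0 yk ys_step]]; exists ys; split => // i ik.
exact: le_trans (ys_step i ik) le_delta.
Qed.

Lemma mper_dvd_le delta delta' : delta <= delta' ->
  (mper d g delta' %| mper d g delta)%N.
Proof.
move=> le_delta; apply: dvd_mper => k [y cyc]; apply: mper_dvd; exists y.
exact: dchain_le cyc.
Qed.

Lemma sim_delta_trans delta y z w :
  sim_delta d g delta y z -> sim_delta d g delta z w -> sim_delta d g delta y w.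
Proof.
move=> [k [yz dvd_k]] [l [zw dvd_l]]; exists (k + l)%N.
by split; [exact: dchain_cat yz zw | rewrite dvdn_add].
Qed.

Lemma sim_trans y z w : sim d g y z -> sim d g z w -> sim d g y w.
Proof. by move=> yz zw delta delta_gt0; exact: sim_delta_trans (yz _ _) (zw _ _). Qed.

Hypothesis g_ct : chain_transitive d g.

Lemma sim_refl y : sim d g y y.
Proof.
move=> delta delta_gt0; have [k cyc] := g_ct _ y y delta_gt0.
by exists k; split => //; apply: mper_dvd; exists y.
Qed.

(* a chain back from z closes the chain from y into a cycle *)
Lemma sim_sym y z : sim d g y z -> sim d g z y.
Proof.
move=> yz delta delta_gt0; have [k [yz_k dvd_k]] := yz _ delta_gt0.
have [l zy_l] := g_ct _ z y delta_gt0; exists l; split => //.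
rewrite -(dvdn_addr _ dvd_k); apply: mper_dvd; exists y.
exact: dchain_cat yz_k zy_l.
Qed.

Lemma Dcl_sim_classE C y : Dcl d g C -> C y -> C = [set z | sim d g y z].
Proof.
move=> [a ->] ay; apply/seteqP; split => z /= az; last exact: sim_trans ay az.
exact: sim_trans (sim_sym ay) az.
Qed.

End Chains.

Section ChainTransfer.
Context {R : realType} {T1 T2 : Type} (d1 : T1 -> T1 -> R) (g1 : T1 -> T1)
  (d2 : T2 -> T2 -> R) (g2 : T2 -> T2) (rel : T1 -> T2 -> Prop).
Hypothesis rel_total : forall a, exists b, rel a b.

Definition rel_steps_le (delta1 delta2 : R) := forall a a' b b',
  rel a a' -> rel b b' -> d1 (g1 a) b <= delta1 -> d2 (g2 a') b' <= delta2.

Lemma dchain_rel delta1 delta2 y z y' z' k : rel_steps_le delta1 delta2 ->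
  rel y y' -> rel z z' -> dchain d1 g1 delta1 y z k -> dchain d2 g2 delta2 y' z' k.
Proof.
move=> steps yy' zz' [ys [k_gt0 y0 yk ys_step]].
have [s rel_s] := choice rel_total.
pose ys' i := if i == 0%N then y' else if i == k then z' else s (ys i).
have rel_ys i : (i <= k)%N -> rel (ys i) (ys' i).
  rewrite /ys'; case: eqVneq => [->|_ _]; first by rewrite y0.
  by case: eqVneq => [->|_]; [rewrite yk | exact: rel_s].
exists ys'; split => //; first by rewrite /ys' (gtn_eqF k_gt0) eqxx.
by move=> i ik; apply: steps (ys_step _ ik); apply: rel_ys => //; exact: ltnW.
Qed.

Lemma mper_rel delta1 delta2 : rel_steps_le delta1 delta2 ->
  (mper d2 g2 delta2 %| mper d1 g1 delta1)%N.
Proof.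
move=> steps; apply: dvd_mper => k [y cyc]; apply: mper_dvd.
by have [y' yy'] := rel_total y; exists y'; exact: dchain_rel cyc.
Qed.

Lemma sim_delta_rel delta1 delta2 y z y' z' : rel_steps_le delta1 delta2 ->
  rel y y' -> rel z z' -> sim_delta d1 g1 delta1 y z -> sim_delta d2 g2 delta2 y' z'.
Proof.
move=> steps yy' zz' [k [yz dvd_k]]; exists k; split; first exact: dchain_rel yz.
exact: dvdn_trans (mper_rel steps) dvd_k.
Qed.

End ChainTransfer.

Definition dist_unif_continuous {R : realType} {T1 T2 : Type}
  (d1 : T1 -> T1 -> R) (d2 : T2 -> T2 -> R) (h : T1 -> T2) :=
  forall e, 0 < e -> exists2 dl, 0 < dl & forall a b, d1 a b <= dl -> d2 (h a) (h b) <= e.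

Lemma sim_semiconj {R : realType} {T1 T2 : Type} {d1 : T1 -> T1 -> R} {g1 : T1 -> T1}
    {d2 : T2 -> T2 -> R} {g2 : T2 -> T2} {h : T1 -> T2} :
  (forall x, h (g1 x) = g2 (h x)) -> dist_unif_continuous d1 d2 h ->
  {homo h : y z / sim d1 g1 y z >-> sim d2 g2 y z}.
Proof.
move=> hg h_unif y z yz delta2 delta2_gt0.
have [delta1 delta1_gt0 h_le] := h_unif _ delta2_gt0.
apply: (sim_delta_rel (rel := fun a b => b = h a)) (yz _ delta1_gt0) => //.
- by move=> a; exists (h a).
- by move=> a _ b _ -> ->; rewrite -hg; exact: h_le.
Qed.

Section MetricChains.
Context {R : realType} {T : metricType R} (g : T -> T).

Lemma dchain_shift_end delta e y c b k : dchain mdist g delta y c k ->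
  mdist c b <= e -> dchain mdist g (delta + e) y b k.
Proof.
move=> [ys [k_gt0 y0 yk ys_step]] cb.
have e_ge0 : 0 <= e by apply: le_trans cb; exact: mdist_ge0.
exists (fun i => if i == k then b else ys i); split => //.
- by rewrite (ltn_eqF k_gt0).
- by rewrite eqxx.
move=> i ik; rewrite (ltn_eqF ik); case: eqVneq => [iSk|_].
  apply: le_trans (metric_triangle _ (ys i.+1) _) _.
  by apply: lerD; [exact: ys_step | rewrite iSk yk].
by apply: le_trans (ys_step i ik) _; rewrite lerDl.
Qed.

Lemma sim_class_closed y : closed [set w | sim mdist g y w].
Proof.
move=> b b_cl delta delta_gt0.
have delta2_gt0 : 0 < delta / 2 by rewrite divr_gt0.
have [c [/= yc bc]] := b_cl _ (nbhsx_ballx b _ delta2_gt0).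
have [k [yc_k dvd_k]] := yc _ delta2_gt0.
exists k; split.
  rewrite [delta]splitr; apply: dchain_shift_end yc_k _.
  by rewrite ballEmdist /= in bc; rewrite metric_sym ltW.
apply: dvdn_trans dvd_k; apply: mper_dvd_le; lra.
Qed.

End MetricChains.

Lemma compact_unif_continuous {R : realType} {T U : metricType R} (h : T -> U) :
  compact [set: T] -> continuous h -> dist_unif_continuous mdist mdist h.
Proof.
(* a cluster point of the pairs witnessing non-uniformity at ever smaller scales
   would be a point of discontinuity *)
move=> T_compact h_cont e e_gt0; apply: contrapT => not_unif.
pose bad dl := [set a | exists b, mdist a b <= dl /\ e < mdist (h a) (h b)].
have bad_ne dl : 0 < dl -> bad dl !=set0.
  move=> dl_gt0; apply: contrapT => bad0; apply: not_unif; exists dl => // a b ab.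
  by rewrite leNgt; apply/negP => hab; apply: bad0; exists a, b.
pose F := filter_from [set dl : R | 0 < dl] bad.
have F_filter : ProperFilter F.
  apply: filter_from_proper => [|dl /bad_ne //]; apply: filter_from_filter.
    by exists 1; exact: ltr01.
  move=> i j i_gt0 j_gt0; exists (Order.min i j); first by rewrite /= lt_min i_gt0.
  by move=> a [b [ab hab]]; split; exists b; split => //;
    apply: le_trans ab _; rewrite ge_min lexx ?orbT.
have [p [_ p_clF]] := T_compact F F_filter filterT.
have e2_gt0 : 0 < e / 2 by rewrite divr_gt0.
have /nbhs_ballP [eta eta_gt0 eta_sub] := h_cont p _ (nbhsx_ballx (h p) _ e2_gt0).
have eta2_gt0 : 0 < eta / 2 by rewrite divr_gt0.
have F_bad : F (bad (eta / 2)) by exists (eta / 2).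
have [a [[b [ab hab]] pa]] := p_clF _ _ F_bad (nbhsx_ballx _ _ eta2_gt0).
rewrite ballEmdist /= in pa.
have /eta_sub ha : ball p eta a by rewrite ballEmdist /=; lra.
have /eta_sub hb : ball p eta b.
  rewrite ballEmdist /=; apply: le_lt_trans (metric_triangle _ a _) _; lra.
move: ha hb; rewrite /= !ballEmdist /= => ha hb.
have := metric_triangle (h a) (h p) (h b); rewrite metric_sym in ha; lra.
Qed.

Lemma exp2N_le {R : realType} {n m : nat} : (n <= m)%N -> (2 : R) ^- m <= 2 ^- n.
Proof. by move=> nm; rewrite -!exprVn ler_wiXn2l // ?invr_ge0 ?invf_le1 ?ler1n. Qed.

Lemma exp2N_le1 {R : realType} (n : nat) : (2 : R) ^- n <= 1.
Proof. by have := @exp2N_le R _ _ (leq0n n); rewrite expr0 invr1. Qed.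

Section LimDist.
Context {R : realType} (X : nat -> metricType R) (pi : forall n, X n.+1 -> X n).
Implicit Types x y u v : invlim pi.

Lemma limdist_ge x y n :
  2 ^- n * Order.min 1 (mdist (proj1_sig x n) (proj1_sig y n)) <= limdist pi x y.
Proof.
apply: ub_le_sup; last by exists n.
exists 1 => _ [m ->]; rewrite mulr_ile1 ?ge_min ?lexx ?le_min ?ler01 ?mdist_ge0 //.
exact: exp2N_le1.
Qed.

Lemma limdist_le x y N (e : R) :
  (forall n, (n <= N)%N -> mdist (proj1_sig x n) (proj1_sig y n) <= e) ->
  2 ^- N.+1 <= e -> limdist pi x y <= e.
Proof.
move=> xy_le small_tail; apply: ge_sup; first by eexists; exists 0%N.
move=> _ [n ->].
have min_ge0 : 0 <= Order.min 1 (mdist (proj1_sig x n) (proj1_sig y n)).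
  by rewrite le_min ler01 mdist_ge0.
case: (leqP n N) => [nN|Nn].
  apply: le_trans (ler_piMl min_ge0 (exp2N_le1 n)) _.
  by rewrite ge_min xy_le ?orbT.
apply: le_trans _ small_tail; apply: le_trans _ (exp2N_le Nn).
by rewrite ler_piMr ?invr_ge0 ?exprn_ge0 // ge_min lexx.
Qed.

Lemma coord_unif_continuous n :
  dist_unif_continuous (limdist pi) mdist (fun x : invlim pi => proj1_sig x n).
Proof.
move=> e e_gt0; exists (2 ^- n * Order.min e (1 / 2)).
  by rewrite mulr_gt0 ?invr_gt0 ?exprn_gt0 // lt_min e_gt0 divr_gt0.
move=> x y /(le_trans (limdist_ge x y n)); rewrite ler_pM2l ?invr_gt0 ?exprn_gt0 //.
by rewrite ge_min !le_min => /orP[/andP[_ half_le]|/andP[]//]; lra.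
Qed.

Hypothesis pi_unif : forall n, dist_unif_continuous mdist mdist (pi n).

Lemma coord_dist_control N (e : R) : 0 < e -> exists2 eps, 0 < eps &
  forall u v, mdist (proj1_sig u N) (proj1_sig v N) <= eps ->
  forall n, (n <= N)%N -> mdist (proj1_sig u n) (proj1_sig v n) <= e.
Proof.
move=> e_gt0; elim: N => [|N [eps eps_gt0 uv_le]].
  by exists e => // u v uv0 n; rewrite leqn0 => /eqP ->.
have [delta delta_gt0 pi_le] := pi_unif N _ eps_gt0.
exists (Order.min delta e) => [|u v uv n]; first by rewrite lt_min delta_gt0.
rewrite le_min in uv; case/andP: uv => uv_delta uv_e.
rewrite leq_eqVlt => /orP[/eqP -> //|nN]; apply: uv_le nN.
by rewrite -(proj2_sig u N) -(proj2_sig v N); exact: pi_le.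
Qed.

(* the coordinates beyond N contribute at most 2^-(N+1) to limdist *)
Lemma limdist_control (e : R) : 0 < e -> exists N, exists2 eps, 0 < eps &
  forall u v, mdist (proj1_sig u N) (proj1_sig v N) <= eps -> limdist pi u v <= e.
Proof.
move=> e_gt0; have [N _ /(_ N.+1 (leqnSn N)) small_tail] :=
  near_infty_natSinv_expn_lt (PosNum e_gt0).
have [eps eps_gt0 uv_le] := coord_dist_control N _ e_gt0.
exists N, eps => // u v uvN; apply: limdist_le (uv_le _ _ uvN) _.
by rewrite -div1r ltW.
Qed.

End LimDist.

Section Threads.
Context {R : realType} (X : nat -> metricType R) (pi : forall n, X n.+1 -> X n).

Definition partial_thread m (t : forall n, X n) :=
  forall n, (n < m)%N -> pi n (t n.+1) = t n.

Lemma partial_thread_dfwith m t c : partial_thread m t -> pi m c = t m ->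
  partial_thread m.+1 (dfwith t m.+1 c).
Proof.
move=> t_thr ct n; rewrite ltnS leq_eqVlt => /orP[/eqP ->|nm].
  by rewrite dfwithin dfwithout // gtn_eqF.
by rewrite !dfwithout ?gtn_eqF //; [exact: t_thr | exact: ltnW].
Qed.

Lemma partial_threadW m m' t : (m <= m')%N -> partial_thread m' t -> partial_thread m t.
Proof. by move=> mm' t_thr n nm; apply: t_thr; exact: leq_trans nm mm'. Qed.

Lemma partial_thread_down (E : forall n, set (X n)) (a0 : forall n, X n) :
  (forall n, E n (a0 n)) -> (forall n b, E n.+1 b -> E n (pi n b)) ->
  forall m b, E m b -> exists t, [/\ t m = b, forall n, E n (t n) & partial_thread m t].
Proof.
move=> E_a0 E_pi; elim=> [|m IHm] b Eb.
  exists (dfwith a0 0%N b); split => [||n //]; first exact: dfwithin.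
  by move=> n; case: dfwithP.
have [t [tm Et t_thr]] := IHm _ (E_pi _ _ Eb).
exists (dfwith t m.+1 b); split; first exact: dfwithin.
  by move=> n; case: dfwithP.
by apply: partial_thread_dfwith; rewrite ?tm.
Qed.

Hypothesis X_compact : forall n, compact [set: X n].
Hypothesis pi_cont : forall n, continuous (pi n).

Import ArrowAsProduct.

(* a cluster point of the partial threads in the compact product of the C n is a thread *)
Lemma thread_in_closed (C : forall n, set (X n)) : (forall n, closed (C n)) ->
  (forall m, exists2 t, (forall n, C n (t n)) & partial_thread m t) ->
  exists u : invlim pi, forall n, C n (proj1_sig u n).
Proof.
move=> C_closed C_threads.
have K_compact : compact [set t : forall n, X n | forall n, C n (t n)].
  apply: (@tychonoff nat X C) => n.
  exact: subclosed_compact (C_closed n) (X_compact n) (subsetT _).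
pose S m := [set t : forall n, X n | (forall n, C n (t n)) /\ partial_thread m t].
pose F := filter_from [set: nat] S.
have F_filter : ProperFilter F.
  apply: filter_from_proper => [|m _]; last by have [t] := C_threads m; exists t.
  apply: filter_from_filter; first by exists 0%N.
  move=> i j _ _; exists (maxn i j) => // t [Ct t_thr].
  by split; split => //; apply: partial_threadW t_thr; rewrite ?leq_maxl ?leq_maxr.
have [|p [Cp p_clF]] := K_compact F F_filter; first by exists 0%N => // t [].
suff p_thr n : pi n (p n.+1) = p n by exists (exist _ p p_thr).
apply: (@metric_hausdorff _ (X n)) => A B A_nbhs B_nbhs.
have near_piA : nbhs p [set t : forall n, X n | A (pi n (t n.+1))].
  exact: (@proj_continuous nat X n.+1 p) (pi_cont n _ _ A_nbhs).
have near_B : nbhs p [set t : forall n, X n | B (t n)].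
  exact: (@proj_continuous nat X n p).
have S_n2 : F (S n.+2) by exists n.+2.
have [t [[_ t_thr] [At Bt]]] := p_clF _ _ S_n2 (filterI near_piA near_B).
by exists (t n); split => //; rewrite -t_thr.
Qed.

Hypothesis pi_MLC1 : MLC1 pi.

(* going up, MLC1 provides a preimage of a point of range (pi n) inside range (pi n.+1) *)
Lemma MLC1_partial_thread (x0 : invlim pi) N a : range (pi N) a ->
  forall j, exists t,
    [/\ t N = a, range (pi (j + N)) (t (j + N)) & partial_thread (j + N) t].
Proof.
move=> a_range; elim=> [|j [t [tN [b _ tb] t_thr]]].
  have [|n b _|t [tN range_t t_thr]] := partial_thread_down
    (fun n => range (pi n)) (proj1_sig x0) _ _ N a a_range.
  - by move=> n; exists (proj1_sig x0 n.+1); rewrite ?(proj2_sig x0 n).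
  - by exists b.
  by exists t.
have [_ [b' _ <-] c_t] : (pi (j + N) @` range (pi (j + N).+1)) (t (j + N)).
  by rewrite -pi_MLC1; exists b.
exists (dfwith t (j + N).+1 (pi _ b')); split.
- by rewrite dfwithout // gtn_eqF // ltnS leq_addl.
- by rewrite dfwithin; exists b'.
- exact: partial_thread_dfwith.
Qed.

Lemma MLC1_thread_through (x0 : invlim pi) N a : range (pi N) a ->
  exists u : invlim pi, proj1_sig u N = a.
Proof.
move=> a_range; pose C := dfwith (fun n => [set: X n]) N [set a].
have [|m|u Cu] := @thread_in_closed C.
- move=> n; rewrite /C; case: dfwithP => [|{}n _]; last exact: closedT.
  exact: accessible_closed_set1 (hausdorff_accessible (@metric_hausdorff R (X N))) a.
- have [t [tN _ t_thr]] := MLC1_partial_thread x0 a_range m.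
  exists t; last exact: partial_threadW (leq_addr _ _) t_thr.
  by move=> n; rewrite /C; case: dfwithP.
by exists u; have := Cu N; rewrite /C dfwithin.
Qed.

End Threads.

Section InverseLimitClasses.
Context {R : realType} {X : nat -> metricType R}
  {f : forall n, X n -> X n} { pi : forall n, X n.+1 -> X n }
  (hc : forall n (x : X n.+1), f n (pi n x) = pi n (f n.+1 x)).
Hypothesis X_compact : forall n, compact [set: X n].
Hypothesis pi_cont : forall n, continuous (pi n).

Local Notation L := (invlim pi).
Local Notation F := (limf hc).

Lemma pi_unif_continuous n : dist_unif_continuous mdist mdist (pi n).
Proof. exact: compact_unif_continuous (X_compact n.+1) (pi_cont n). Qed.

Lemma sim_pi n a b : sim mdist (f n.+1) a b -> sim mdist (f n) (pi n a) (pi n b).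
Proof.
have pi_semiconj x : pi n (f n.+1 x) = f n (pi n x) by rewrite hc.
exact: sim_semiconj pi_semiconj (pi_unif_continuous n) a b.
Qed.

Lemma sim_coord n (x z : L) : sim (limdist pi) F x z ->
  sim mdist (f n) (proj1_sig x n) (proj1_sig z n).
Proof.
have coord_semiconj (u : L) : proj1_sig (F u) n = f n (proj1_sig u n) by [].
exact: sim_semiconj coord_semiconj (coord_unif_continuous X pi n) x z.
Qed.

Hypothesis pi_MLC1 : MLC1 pi.

Lemma sim_of_coord (x z : L) :
  (forall n, sim mdist (f n) (proj1_sig x n) (proj1_sig z n)) -> sim (limdist pi) F x z.
Proof.
move=> xz e e_gt0.
have [N [eps eps_gt0 limdist_le_eps]] :=
  limdist_control X pi pi_unif_continuous e e_gt0.
have [delta delta_gt0 piN_le] := pi_unif_continuous N _ eps_gt0.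
have lift (a : X N.+1) : exists u : L, proj1_sig u N = pi N a.
  have a_range : range (pi N) (pi N a) by exists a.
  exact: (MLC1_thread_through X_compact pi_cont pi_MLC1 x N a_range).
apply: (sim_delta_rel lift x z) (xz N.+1 _ delta_gt0).
- move=> a u b v /= ua vb ab; apply: limdist_le_eps.
  by rewrite /= ua vb hc; exact: piN_le.
- exact: esym (proj2_sig x N).
- exact: esym (proj2_sig z N).
Qed.

Lemma sim_limE (y : L) : [set z | sim (limdist pi) F y z] =
  [set x : L | forall n, sim mdist (f n) (proj1_sig y n) (proj1_sig x n)].
Proof.
by apply/seteqP; split => z /=; [move=> yz n; exact: sim_coord | exact: sim_of_coord].
Qed.

Hypothesis f_ct : forall n, chain_transitive mdist (f n).

Lemma thread_in_classes (D : forall n, set (X n)) :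
  (forall n, Dcl mdist (f n) (D n)) -> (forall n, pi n @` D n.+1 `<=` D n) ->
  exists y : L, forall n, D n (proj1_sig y n).
Proof.
move=> D_cl D_pi.
have [a0 a0E] : exists a0 : forall n, X n,
    forall n, D n = [set z | sim mdist (f n) (a0 n) z].
  by exists (fun n => proj1_sig (cid (D_cl n))) => n; exact: proj2_sig (cid (D_cl n)).
have D_a0 n : D n (a0 n) by rewrite a0E; exact: sim_refl.
apply: (thread_in_closed X_compact pi_cont D) => [n|m].
  by rewrite a0E; exact: sim_class_closed.
have D_pi' n b : D n.+1 b -> D n (pi n b) by move=> Db; apply: D_pi; exists b.
have [t [_ Dt t_thr]] := partial_thread_down X pi D a0 D_a0 D_pi' m (a0 m) (D_a0 m).
by exists t.
Qed.

End InverseLimitClasses.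

Theorem lemma3p3 (R : realType) (X : nat -> metricType R)
  (f : forall n, X n -> X n) (pi : forall n, X n.+1 -> X n)
  (hX : forall n, compact [set: X n])
  (hf : forall n, continuous (f n))
  (hpi : forall n, continuous (pi n))
  (hc : forall n (x : X n.+1), f n (pi n x) = pi n (f n.+1 x))
  (hct : forall n, chain_transitive (@mdist R (X n)) (f n))
  (hmlc : MLC1 pi) :
  Dcl (limdist pi) (limf hc) =
  [set [set x : invlim pi | forall n, D n (proj1_sig x n)]
     | D in [set D : forall n, set (X n) |
               (forall n, Dcl (@mdist R (X n)) (f n) (D n)) /\
               (forall n, pi n @` D n.+1 `<=` D n)]].
Proof.
apply/seteqP; split => C => [[y ->]|[D [D_cl D_pi] <-]].
  exists (fun n => [set z | sim mdist (f n) (proj1_sig y n) z]).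
    split=> [n|n _ [a ya <-]]; first by exists (proj1_sig y n).
    by rewrite /= -(proj2_sig y n); exact: (sim_pi hc hX hpi).
  by rewrite (sim_limE hc hX hpi hmlc).
have [y Dy] := thread_in_classes hX hpi hct D D_cl D_pi.
have D_classE n := Dcl_sim_classE (hct n) _ (D_cl n) (Dy n).
exists y; rewrite (sim_limE hc hX hpi hmlc); apply/seteqP; split => x /= Dx n.
  by have := Dx n; rewrite D_classE.
by rewrite D_classE; exact: Dx.
Qed.
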